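(* For every $n\ge 2$ and every proper ideal $\Delta\subset B_n$, the Bier sphere $\mathrm{Bier}(B_n,\Delta)$ is a shellable simplicial complex (of dimension $n-2$).
   Context: $B_n$ is the Boolean lattice of all subsets of $[1,n]=\{1,\dots,n\}$. A proper ideal $\Delta\subset B_n$ is a nonempty family of subsets of $[1,n]$ closed under taking subsets with $[1,n]\notin\Delta$ (an abstract simplicial complex with $\emptyset\in\Delta$). The Bier sphere $\mathrm{Bier}(B_n,\Delta)$ is the simplicial complex whose faces are the pairs $(B,C)$ with $B\subsetneq C\subseteq[1,n]$, $B\in\Delta$, $C\notin\Delta$, with $(B',C')$ a face of $(B,C)$ iff $B'\subseteq B$ and $C\subseteq C'$; concretely $(B,C)$ is the vertex set $B\sqcup\{\bar d: d\in[1,n]\setminus C\}$ on the vertex set $[1,n]\sqcup\{\bar1,\dots,\bar n\}$ (the deleted join of $\Delta$ with its Alexander dual). The face $(B,C)$ has $|B|+n-|C|$ vertices. Its facets are the pairs $(A;x):=(A,A\cup\{x\})$ with $A\in\Delta$, $x\notin A$, $A\cup\{x\}\notin\Delta$; each has $n-1$ vertices. A pure simplicial complex is shellable if its facets can be ordered $F_1,F_2,\dots$ so that for each $k\ge2$ the intersection of $F_k$ with $F_1\cup\dots\cup F_{k-1}$ (as subcomplexes) is pure of dimension $\dim F_k-1$. *)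

From mathcomp Require Import all_boot.
Set Implicit Arguments.
Unset Strict Implicit.
Unset Printing Implicit Defensive.

(* [1,n] is represented by 'I_n (0-indexed); the vertex set
   [1,n] ⊔ {bar 1,...,bar n} is 'I_n + 'I_n (inl d = d, inr d = bar d). *)

Definition proper_ideal (n : nat) (D : {set {set 'I_n}}) : Prop :=
  [/\ D != set0,
      (forall A B : {set 'I_n}, B \subset A -> A \in D -> B \in D)
    & [set: 'I_n] \notin D].

Definition bier_face (n : nat) (B C : {set 'I_n}) : {set 'I_n + 'I_n} :=
  (@inl 'I_n 'I_n) @: B :|: (@inr 'I_n 'I_n) @: (~: C).

Definition Bier (n : nat) (D : {set {set 'I_n}}) : {set {set 'I_n + 'I_n}} :=
  [set bier_face BC.1 BC.2 | BC in
     [set BC : {set 'I_n} * {set 'I_n} |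
        [&& BC.1 \proper BC.2, BC.1 \in D & BC.2 \notin D]]].

Definition facet (V : finType) (K : {set {set V}}) (F : {set V}) : Prop :=
  F \in K /\ (forall G, G \in K -> F \subset G -> G = F).

Definition pure_size (V : finType) (L : {set {set V}}) (s : nat) : Prop :=
  (forall G, G \in L -> exists2 H, H \in L & G \subset H /\ #|H| = s) /\
  (forall H, H \in L -> #|H| <= s).

Definition pure (V : finType) (K : {set {set V}}) : Prop :=
  exists s, forall F, facet K F -> #|F| = s.

Definition shell_inter (V : finType) (F : {set V}) (prev : seq {set V})
  : {set {set V}} :=
  [set G : {set V} | (G \subset F) && has (fun F' : {set V} => G \subset F') prev].

(* Shellability of a pure complex: an ordering F_1, F_2, ... of all facets
   such that, for k >= 2, F_k ∩ (F_1 ∪ ... ∪ F_{k-1}) is pure of dimension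
   dim F_k - 1 (i.e. its faces are contained in faces with #|F_k|-1 vertices). *)
Definition shellable (V : finType) (K : {set {set V}}) : Prop :=
  pure K /\
  exists2 s : seq {set V},
    uniq s /\ (forall F, F \in s <-> facet K F) &
    forall k, 0 < k < size s ->
      pure_size (shell_inter (nth set0 s k) (take k s))
                (#|nth set0 s k| - 1).

From mathcomp Require Import all_boot zify.
Set Implicit Arguments.
Unset Strict Implicit.
Unset Printing Implicit Defensive.

(* Induction on the ground set: write Bier(S, D) for the Bier sphere of the ideal of
   subsets of S lying in D, with facets (A; x).  For e \in S its facets fall
   into three blocks: e \in A (a cone with apex e over Bier(S :\ e, link D e)),
   x = e, and e \notin x |: A (a cone with apex bar e over Bier(S :\ e, D)).
   Shell the first block by induction, then the facets (A; e) by increasing #|A|,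
   then the third block by induction.  A facet (A; e) meets each earlier facet
   outside some vertex a \in A, and dropping a leaves a face of (e |: A :\ a; a) or
   of the earlier (A :\ a; e); a facet of the third block meets the earlier blocks
   outside bar e, and dropping bar e leaves a face of (e |: A; x) or of (A; e). *)

Definition before (T : eqType) (s : seq T) (x y : T) := index x s < index y s.

Section Before.
Variable T : eqType.
Implicit Types (s : seq T) (x y : T).

Lemma before_mem s x y : before s x y -> x \in s.
Proof. by rewrite -index_mem => /leq_trans; apply; apply: index_size. Qed.

Lemma before_catl s1 s2 x y :
  y \in s1 -> before (s1 ++ s2) x y = before s1 x y.
Proof.
rewrite /before !index_cat => ys1; rewrite ys1; move: ys1; rewrite -index_mem.
by case: ifP => // /negbT/memNindex->; lia.
Qed.

Lemma before_catr s1 s2 x y :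
  y \notin s1 -> before (s1 ++ s2) x y = (x \in s1) || before s2 x y.
Proof.
rewrite /before !index_cat => /negPf->; case: ifP => [|_]; last by rewrite ltn_add2l.
by rewrite -index_mem; lia.
Qed.

Lemma index_map_in (U : eqType) (f : T -> U) s x :
  {in s &, injective f} -> x \in s -> index (f x) (map f s) = index x s.
Proof.
elim: s => //= y s IH finj; rewrite inE => xys.
have [->|neq_yx] := eqVneq y x; first by rewrite eqxx.
have xs : x \in s by move: xys; rewrite eq_sym (negPf neq_yx).
rewrite IH // => [|u v us vs]; last by apply: finj; rewrite inE ?us ?vs orbT.
suff /negPf-> : f y != f x by [].
by apply: contraNneq neq_yx => /finj->; rewrite ?inE ?eqxx ?xs ?orbT.
Qed.

Lemma before_map_in (U : eqType) (f : T -> U) s x y :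
  {in s &, injective f} -> x \in s -> y \in s ->
  before (map f s) (f x) (f y) = before s x y.
Proof. by move=> finj xs ys; rewrite /before !index_map_in. Qed.

End Before.

Section Shelling.
Variable V : finType.
Implicit Types (t : seq {set V}) (F G H : {set V}).

(* Every earlier [G] meets [F] inside a codimension-one face [F :\ v] that already
   lies in an earlier facet: the facet-wise form of shellability. *)
Definition shelling t := forall F G, F \in t -> before t G F ->
  exists v, [/\ v \in F, v \notin G & exists2 H, before t H F & F :\ v \subset H].

Lemma shelling_cat t1 t2 : shelling t1 ->
  (forall F G, F \in t2 -> (G \in t1) || before t2 G F ->
     exists v, [/\ v \in F, v \notin G &
       exists2 H, (H \in t1) || before t2 H F & F :\ v \subset H]) ->
  shelling (t1 ++ t2).
Proof.
move=> sh1 sh2 F G; rewrite mem_cat.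
have [Ft1 _|Ft1 /= Ft2] := boolP (F \in t1).
  rewrite before_catl // => /(sh1 _ _ Ft1)[v [vF vG [H HF FH]]].
  by exists v; split=> //; exists H; rewrite ?before_catl.
rewrite before_catr // => /(sh2 _ _ Ft2)[v [vF vG [H HF FH]]].
by exists v; split=> //; exists H; rewrite ?before_catr.
Qed.

Lemma setU1_inj_in w t : (forall F, F \in t -> w \notin F) ->
  {in t &, injective (fun F => w |: F)}.
Proof. by move=> wt; apply: (can_in_inj (g := fun X => X :\ w)) => X /wt/setU1K. Qed.

Lemma shelling_map_setU1 w t : (forall F, F \in t -> w \notin F) ->
  shelling t -> shelling [seq w |: F | F <- t].
Proof.
move=> wt sh _ G' /mapP[F Ft ->] GF.
have inj := setU1_inj_in wt.
have /mapP[G Gt eG] := before_mem GF.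
move: GF; rewrite {}eG before_map_in // => /(sh _ _ Ft)[v [vF vG [H HF FH]]].
have Ht := before_mem HF.
have vw : v != w by apply: contraNneq (wt F Ft) => <-.
exists v; split; first by rewrite !inE vF orbT.
  by rewrite !inE negb_or vw.
exists (w |: H); first by rewrite before_map_in.
apply/subsetP=> z; rewrite !inE => /andP[zv /orP[->//|zF]].
by rewrite (subsetP FH) ?orbT // !inE zv.
Qed.

Lemma shelling_pure_size t c : uniq t -> {in t, forall F, #|F| = c} ->
  shelling t -> forall k, k < size t ->
  pure_size (shell_inter (nth set0 t k) (take k t)) (#|nth set0 t k| - 1).
Proof.
move=> ut cF sh k kt; set F := nth set0 t k.
have Ft : F \in t by apply: mem_nth.
have earlier F' : F' \in take k t -> before t F' F.
  move=> F'k; have F't := mem_take F'k.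
  by move: F'k; rewrite in_take // /before index_uniq.
have earlier_take H : before t H F -> H \in take k t.
  by move=> HF; rewrite in_take ?(before_mem HF) // -(index_uniq set0 kt ut).
split=> [G|H]; rewrite inE => /andP[sub_F /hasP[F' /earlier F'F sub_F']].
  have [v [vF vF' [H HF FH]]] := sh _ _ Ft F'F.
  exists (F :\ v).
    by rewrite inE subsetDl; apply/hasP; exists H => //; apply: earlier_take.
  split; last by rewrite (cardsD1 v F) vF subn1.
  rewrite subsetD1 sub_F; apply: contra vF' => vG; exact: (subsetP sub_F').
have F't := before_mem F'F.
have neq_F'F : F' != F by apply: contraTneq F'F => ->; rewrite /before ltnn.
suff /proper_card : H \proper F by lia.
rewrite properEneq sub_F andbT; apply: contraNneq neq_F'F => eHF.
by rewrite eq_sym eqEcard (cF _ F't) (cF _ Ft) leqnn andbT -eHF.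
Qed.

End Shelling.

Definition downward_closed (T : finType) (D : {set {set T}}) :=
  forall A B : {set T}, B \subset A -> A \in D -> B \in D.

Section BierFacets.
Variable n : nat.
Notation I := 'I_n.
Implicit Types (S A B C : {set I}) (D : {set {set I}}) (a d e x y : I).

Definition link D e := [set A | e |: A \in D].

Lemma link_downward_closed D e : downward_closed D -> downward_closed (link D e).
Proof. by move=> dcD A B BA; rewrite !inE; apply: dcD; apply: setUS. Qed.

(* The facet (A; x) of Bier(S, D), i.e. the face (A, x |: A) of the Bier sphere of
   D restricted to the ground set S. *)
Definition bier_facet S A x : {set I + I} := inl @: A :|: inr @: (S :\: (x |: A)).

Definition bier_pair S D A x : bool :=
  [&& A \subset S, x \in S :\: A, A \in D & x |: A \notin D].

Definition is_bier_facet S D (F : {set I + I}) : Prop :=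
  exists A x, bier_pair S D A x /\ F = bier_facet S A x.

Lemma inl_bier_facet S A x a : (inl a \in bier_facet S A x) = (a \in A).
Proof.
rewrite in_setU; apply/orP/idP => [[/imsetP[b bA [->]] // | /imsetP[? _ //]] | aA].
by left; apply: imset_f.
Qed.

Lemma inr_bier_facet S A x d : (inr d \in bier_facet S A x) = (d \in S :\: (x |: A)).
Proof.
rewrite in_setU; apply/orP/idP => [[/imsetP[? _ //] | /imsetP[b bA [->]]] // | dA].
by right; apply: imset_f.
Qed.

Lemma bier_facet_inj S e : injective (fun A => bier_facet S A e).
Proof. by move=> A B eAB; apply/setP=> a; rewrite -!(inl_bier_facet S _ e) eAB. Qed.

Lemma bier_facet_setU1 S A x e :
  bier_facet S (e |: A) x = inl e |: bier_facet (S :\ e) A x.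
Proof.
apply/setP=> -[a|d].
all: rewrite in_setU1 ?inl_bier_facet ?inr_bier_facet ?(inj_eq inl_inj) !inE //.
by case: (d == e); rewrite /= ?orbT ?andbT ?andbF.
Qed.

Lemma bier_facet_setD1 S A x e : e \in S :\: (x |: A) ->
  bier_facet S A x = inr e |: bier_facet (S :\ e) A x.
Proof.
rewrite !inE negb_or => /andP[/andP[ex eA] eS].
apply/setP=> -[a|d]; rewrite in_setU1 ?inl_bier_facet ?inr_bier_facet //=.
rewrite (inj_eq inr_inj) !inE.
by have [->|_] := eqVneq d e; rewrite ?(negPf ex) ?(negPf eA) ?eS ?andbT.
Qed.

Lemma bier_pair_setU1 S D A x e : e \in S -> e \notin A ->
  bier_pair S D (e |: A) x = bier_pair (S :\ e) (link D e) A x.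
Proof.
move=> eS eA; rewrite /bier_pair subsetD1 eA subUset sub1set !inE negb_or setUCA.
by rewrite eS andbT; case: (x != e); case: (x \in A).
Qed.

Lemma bier_pair_setD1 S D A x e : e \notin A -> x != e ->
  bier_pair S D A x = bier_pair (S :\ e) D A x.
Proof. by move=> eA xe; rewrite /bier_pair subsetD1 eA !inE xe andbT. Qed.

Definition nonlink S D e :=
  [set A : {set I} | [&& A \subset S :\ e, A \in D & e |: A \notin D]].

Lemma bier_pair_nonlink S D A e : e \in S -> bier_pair S D A e = (A \in nonlink S D e).
Proof. by move=> eS; rewrite /bier_pair !inE subsetD1 eS andbT andbA. Qed.

Definition card_le (A B : {set I}) := #|A| <= #|B|.

Definition nonlink_seq S D e := sort card_le (enum (nonlink S D e)).

Lemma card_le_trans : transitive card_le.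
Proof. by move=> B A C; apply: leq_trans. Qed.

Lemma nonlink_seq_sorted S D e : sorted card_le (nonlink_seq S D e).
Proof. by apply: sort_sorted => A B; apply: leq_total. Qed.

Lemma mem_nonlink_seq S D e A : (A \in nonlink_seq S D e) = (A \in nonlink S D e).
Proof. by rewrite mem_sort mem_enum. Qed.

Lemma nonlink_seq_uniq S D e : uniq (nonlink_seq S D e).
Proof. by rewrite sort_uniq enum_uniq. Qed.

Lemma before_nonlink_card S D e A B : A \in nonlink S D e ->
  before (nonlink_seq S D e) B A -> #|B| <= #|A|.
Proof.
rewrite -mem_nonlink_seq => As BA; have Bs := before_mem BA.
exact: (sorted_ltn_index card_le_trans (nonlink_seq_sorted S D e)).
Qed.

Lemma card_before_nonlink S D e A B : A \in nonlink S D e -> B \in nonlink S D e ->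
  #|B| < #|A| -> before (nonlink_seq S D e) B A.
Proof.
rewrite -!mem_nonlink_seq => An Bn ltBA; rewrite /before ltnNge.
apply: contraL ltBA => leAB; rewrite -leqNgt.
exact: (sorted_leq_index card_le_trans (fun C => leqnn #|C|)
          (nonlink_seq_sorted S D e) A B An Bn leAB).
Qed.

Lemma before_nonlink_facet S D e A B : A \in nonlink S D e -> B \in nonlink S D e ->
  before [seq bier_facet S C e | C <- nonlink_seq S D e]
         (bier_facet S B e) (bier_facet S A e)
  = before (nonlink_seq S D e) B A.
Proof.
move=> An Bn; rewrite before_map_in ?mem_nonlink_seq //.
by apply: in2W; apply: bier_facet_inj.
Qed.

Lemma bier_pair_notin S D A x e : e \notin S -> bier_pair S D A x ->
  (e \notin A) && (x != e).
Proof.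
move=> eS /and4P[AS xSA _ _]; rewrite (contra (subsetP AS e)) //=.
by apply: contraNneq eS => <-; move: xSA; rewrite inE => /andP[].
Qed.

Lemma is_bier_facet_notin S D F e : e \notin S -> is_bier_facet S D F ->
  (inl e \notin F) && (inr e \notin F).
Proof.
move=> eS [A [x [/(bier_pair_notin eS)/andP[eA _] ->]]].
by rewrite inl_bier_facet inr_bier_facet eA !inE (negPf eS) andbF.
Qed.

Lemma bier_facet_delete S A B x y a : A :\ a \subset B -> y |: B \subset x |: A ->
  bier_facet S A x :\ inl a \subset bier_facet S B y.
Proof.
move=> AB BA; apply/subsetP => -[z|z].
all: rewrite in_setD1 ?inl_bier_facet ?inr_bier_facet.
  by rewrite (inj_eq inl_inj) => zAa; apply: (subsetP AB); rewrite in_setD1.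
by move=> /andP[_]; apply: (subsetP (setDS S BA)).
Qed.

Section Step.
Variables (S : {set I}) (D : {set {set I}}) (e : I) (t1 t0 : seq {set I + I}).
Hypotheses (dcD : downward_closed D) (eS : e \in S).
Hypothesis t1E : forall F, F \in t1 <-> is_bier_facet (S :\ e) (link D e) F.
Hypothesis t0E : forall F, F \in t0 <-> is_bier_facet (S :\ e) D F.

Local Notation T1 := [seq inl e |: F | F <- t1].
Local Notation T2 := [seq bier_facet S A e | A <- nonlink_seq S D e].
Local Notation T3 := [seq inr e |: F | F <- t0].

Let eS' : e \notin S :\ e. Proof. by rewrite setD11. Qed.

Let t1_notin F : F \in t1 -> (inl e \notin F) && (inr e \notin F).
Proof. by move/t1E; apply: is_bier_facet_notin. Qed.

Let t0_notin F : F \in t0 -> (inl e \notin F) && (inr e \notin F).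
Proof. by move/t0E; apply: is_bier_facet_notin. Qed.

Let nonlink_notin A : A \in nonlink S D e -> e \notin A.
Proof. by rewrite inE => /and3P[/subsetP AS _ _]; apply: contra eS' => /AS. Qed.

Let mem_T1_inl F : F \in T1 -> inl e \in F.
Proof. by case/mapP=> F1 _ ->; apply: setU11. Qed.

Let mem_T23_inl F : F \in T2 ++ T3 -> inl e \notin F.
Proof.
rewrite mem_cat => /orP[/mapP[A An ->] | /mapP[F0 /t0_notin/andP[eF0 _] ->]].
  by rewrite inl_bier_facet nonlink_notin // -mem_nonlink_seq.
by rewrite in_setU1 (negPf eF0) orbF.
Qed.

Let mem_T3_inr F : F \in T3 -> inr e \in F.
Proof. by case/mapP=> F0 _ ->; apply: setU11. Qed.

Let mem_T12_inr F : F \in T1 ++ T2 -> inr e \notin F.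
Proof.
rewrite mem_cat => /orP[/mapP[F1 /t1_notin/andP[_ eF1] ->] | /mapP[A _ ->]].
  by rewrite in_setU1 (negPf eF1) orbF.
by rewrite inr_bier_facet !inE eqxx.
Qed.

Lemma mem_step F : F \in T1 ++ T2 ++ T3 <-> is_bier_facet S D F.
Proof.
rewrite !mem_cat; split.
  case/or3P=> [/mapP[F1 /t1E[A [x [Ax ->]]] ->] | /mapP[A An ->]
              | /mapP[F0 /t0E[A [x [Ax ->]]] ->]].
  - have /andP[eA _] := bier_pair_notin eS' Ax.
    by exists (e |: A), x; rewrite bier_pair_setU1 // bier_facet_setU1.
  - by exists A, e; rewrite bier_pair_nonlink // -mem_nonlink_seq.
  - have /andP[eA xe] := bier_pair_notin eS' Ax.
    exists A, x; rewrite (bier_pair_setD1 _ _ eA xe).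
    rewrite [RHS](bier_facet_setD1 (e := e)) //.
    by rewrite !inE negb_or eq_sym xe eA eS.
case=> A [x [Ax ->]].
have [eA|eA] := boolP (e \in A).
  apply/or3P; apply: Or31; apply/mapP; exists (bier_facet (S :\ e) (A :\ e) x).
    by apply/t1E; exists (A :\ e), x; rewrite -bier_pair_setU1 ?setD11 ?setD1K.
  by rewrite -bier_facet_setU1 setD1K.
have [xe|xe] := eqVneq x e.
  apply/or3P; apply: Or32; apply/mapP; exists A; last by rewrite xe.
  by rewrite mem_nonlink_seq -bier_pair_nonlink // -xe.
apply/or3P; apply: Or33; apply/mapP; exists (bier_facet (S :\ e) A x).
  by apply/t0E; exists A, x; rewrite -bier_pair_setD1.
by apply: bier_facet_setD1; rewrite !inE negb_or eq_sym xe eA eS.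
Qed.

Lemma step_uniq : uniq t1 -> uniq t0 -> uniq (T1 ++ T2 ++ T3).
Proof.
move=> ut1 ut0; rewrite cat_uniq (cat_uniq T2).
apply/and3P; split; [| | apply/and3P; split].
- by rewrite map_inj_in_uniq //; apply: setU1_inj_in => F /t1_notin/andP[].
- by apply/hasPn => F /mem_T23_inl; apply: contra; apply: mem_T1_inl.
- by rewrite map_inj_in_uniq ?nonlink_seq_uniq //; apply: in2W; apply: bier_facet_inj.
- apply/hasPn => F /mem_T3_inr; apply: contraL => FT2.
  by apply: mem_T12_inr; rewrite mem_cat FT2 orbT.
- by rewrite map_inj_in_uniq //; apply: setU1_inj_in => F /t0_notin/andP[].
Qed.

Lemma nonlink_separate A G : A \in nonlink S D e ->
  (G \in T1) || before T2 G (bier_facet S A e) ->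
  exists2 a, a \in A & inl a \notin G.
Proof.
move=> An; have := An; rewrite inE => /and3P[AS AD eAD].
case/orP => [/mapP[F1 /t1E[B [x [Bx ->]]] ->] | GA].
  have /and4P[_ _ BD _] := Bx; rewrite inE in BD.
  have /subsetPn[a aA aB] : ~~ (A \subset B).
    by apply: contra eAD => AB; apply: dcD BD; apply: setUS.
  have ae : a != e by apply: contraTneq aA => ->; apply: nonlink_notin.
  by exists a; rewrite // in_setU1 inl_bier_facet (inj_eq inl_inj) negb_or ae.
have /mapP[B Bs eG] := before_mem GA; rewrite mem_nonlink_seq in Bs.
move: GA; rewrite eG before_nonlink_facet // => BA.
have /subsetPn[a aA aB] : ~~ (A \subset B).
  apply/negP => AB; have /eqP eAB : A == B.
    by rewrite eqEcard AB (before_nonlink_card An BA).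
  by move: BA; rewrite eAB /before ltnn.
by exists a; rewrite // inl_bier_facet.
Qed.

Lemma nonlink_extend A a : A \in nonlink S D e -> a \in A ->
  exists2 H, (H \in T1) || before T2 H (bier_facet S A e)
           & bier_facet S A e :\ inl a \subset H.
Proof.
move=> An aA; have := An; rewrite inE => /and3P[AS AD eAD].
have aS' : a \in S :\ e := subsetP AS a aA.
have AaS' : A :\ a \subset S :\ e := subset_trans (subD1set A a) AS.
have [eAaD|eAaD] := boolP (e |: (A :\ a) \in D).
  exists (bier_facet S (e |: (A :\ a)) a).
    rewrite bier_facet_setU1 map_f //; apply/t1E; exists (A :\ a), a; split => //.
    by apply/and4P; rewrite in_setD setD11 aS' !inE (setD1K aA) AaS' eAaD.
  by apply: bier_facet_delete; rewrite ?subsetUr // setUCA (setD1K aA).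
have AaN : A :\ a \in nonlink S D e.
  by rewrite inE AaS' (dcD (subD1set A a) AD) eAaD.
exists (bier_facet S (A :\ a) e).
  rewrite before_nonlink_facet //.
  by apply/orP; right; apply: card_before_nonlink; rewrite // (cardsD1 a A) aA.
by apply: bier_facet_delete => //; rewrite setUS // subD1set.
Qed.

Lemma t0_cover F0 : F0 \in t0 -> exists2 H, H \in T1 ++ T2 & F0 \subset H.
Proof.
case/t0E=> B [x [Bx ->]]; have /and4P[BS xSB BD xBD] := Bx.
have [eBD|eBD] := boolP (e |: B \in D).
  exists (inl e |: bier_facet (S :\ e) B x); last exact: subsetUr.
  rewrite mem_cat map_f //; apply/t1E; exists B, x; split => //.
  rewrite /bier_pair BS xSB !inE eBD /=; apply: contra xBD.
  by apply: dcD; rewrite subsetUr.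
exists (bier_facet S B e).
  rewrite mem_cat; apply/orP; right; apply: map_f.
  by rewrite mem_nonlink_seq inE BS BD eBD.
apply: setUS; apply: imsetS; rewrite setDDl; apply: setDS.
by apply: setUS; apply: subsetUr.
Qed.

Lemma step_shelling : shelling t1 -> shelling t0 -> shelling (T1 ++ T2 ++ T3).
Proof.
move=> sh1 sh0; rewrite catA; apply: shelling_cat.
  apply: shelling_cat; first by apply: shelling_map_setU1 => // F /t1_notin/andP[].
  move=> _ G /mapP[A An ->] GA; rewrite mem_nonlink_seq in An.
  have [a aA aG] := nonlink_separate An GA; have [H HA AH] := nonlink_extend An aA.
  by exists (inl a); split => //; [rewrite inl_bier_facet | exists H].
have sh3 : shelling T3 by apply: shelling_map_setU1 => // F /t0_notin/andP[].
move=> _ G /mapP[F0 F0t ->] /orP[GT12 | GF].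
  have [H HT F0H] := t0_cover F0t; have /andP[_ eF0] := t0_notin F0t.
  exists (inr e); split; [exact: setU11 | exact: mem_T12_inr | ].
  by exists H; rewrite ?HT // setU1K.
have [v [vF vG [H HF FH]]] := sh3 _ _ (map_f _ F0t) GF.
by exists v; split => //; exists H; rewrite ?HF ?orbT.
Qed.

End Step.

Lemma bier_shelling_exists S D : downward_closed D ->
  exists t, [/\ forall F, F \in t <-> is_bier_facet S D F, uniq t & shelling t].
Proof.
have [k] := ubnP #|S|; elim: k S D => // k IH S D ltSk dcD.
have [S0|[e eS]] := set_0Vmem S.
  exists [::]; split=> // F; split=> // -[A [x [/and4P[_ + _ _] _]]].
  by rewrite S0 !inE andbF.
have ltS'k : #|S :\ e| < k by move: ltSk; rewrite (cardsD1 e S) eS.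
have [t1 [t1E ut1 sh1]] := IH _ (link D e) ltS'k (link_downward_closed (e := e) dcD).
have [t0 [t0E ut0 sh0]] := IH _ D ltS'k dcD.
exists ([seq inl e |: F | F <- t1] ++ [seq bier_facet S A e | A <- nonlink_seq S D e]
        ++ [seq inr e |: F | F <- t0]).
by split; [apply: mem_step | apply: step_uniq | apply: step_shelling].
Qed.

Lemma card_bier_facet S D A x : bier_pair S D A x -> #|bier_facet S A x| = #|S|.-1.
Proof.
case/and4P=> AS xSA _ _; move: xSA; rewrite inE => /andP[xA xS].
have xAS : x |: A \subset S by rewrite subUset sub1set xS.
have disj : inl @: A :&: inr @: (S :\: (x |: A)) = set0 :> {set I + I}.
  apply/setP=> z; rewrite in_setI in_set0.
  by apply/andP=> -[/imsetP[? _ ->] /imsetP[]].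
rewrite /bier_facet cardsU disj (card_imset _ inl_inj) (card_imset _ inr_inj) cards0.
have := subset_leq_card xAS; rewrite (cardsDS xAS) cardsU1 xA /=.
by move: #|A| #|S| => a s; lia.
Qed.

Lemma bier_face_bier_facet A x : bier_face A (x |: A) = bier_facet setT A x.
Proof. by rewrite /bier_face /bier_facet setTD. Qed.

Lemma bier_facet_in_Bier D A x : bier_pair setT D A x -> bier_facet setT A x \in Bier D.
Proof.
case/and4P=> _ xA AD xAD; rewrite -bier_face_bier_facet; apply/imsetP.
exists (A, x |: A) => //; rewrite inE /= AD xAD andbT.
by rewrite properUr // sub1set; rewrite inE in xA; case/andP: xA.
Qed.

Lemma bier_face_sub D B C :
  downward_closed D -> B \proper C -> B \in D -> C \notin D ->
  exists2 F, is_bier_facet setT D F & bier_face B C \subset F.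
Proof.
move=> dcD BC BD CD.
pose P (A : {set I}) := [&& B \subset A, A \proper C & A \in D].
have PB : P B by rewrite /P subxx BC BD.
have [A /and3P[BA AC AD] Amax] := arg_maxnP (fun A : {set I} => #|A|) PB.
have [AC' [x xC xA]] := properP AC.
have xAC : x |: A \subset C by rewrite subUset sub1set xC.
have xAD : x |: A \notin D.
  apply/negP => xAD; have [eC|neC] := eqVneq (x |: A) C; first by rewrite -eC xAD in CD.
  have := Amax (x |: A); rewrite /P xAD (subset_trans BA (subsetUr _ _)).
  by rewrite properEneq neC xAC cardsU1 xA /= ltnn => /(_ isT).
exists (bier_facet setT A x).
  by exists A, x; split=> //; rewrite /bier_pair subsetT !inE xA AD xAD.
rewrite -bier_face_bier_facet; apply: setUSS; apply: imsetS => //.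
by rewrite setCS.
Qed.

Lemma facet_BierE D F : downward_closed D ->
  facet (Bier D) F <-> is_bier_facet setT D F.
Proof.
move=> dcD; split.
  case=> /imsetP[[B C]]; rewrite inE /= => /and3P[BC BD CD] -> Fmax.
  have [F' F'f sub] := bier_face_sub dcD BC BD CD.
  have [A [x [Ax eF']]] := F'f.
  by rewrite -(Fmax F') // eF'; apply: bier_facet_in_Bier.
case=> A [x [Ax ->]]; split; first exact: bier_facet_in_Bier.
move=> G /imsetP[[B C]]; rewrite inE /= => /and3P[BC BD CD] -> sub.
have [_ [A' [x' [A'x' ->]]] subF'] := bier_face_sub dcD BC BD CD.
apply/eqP; rewrite eq_sym eqEcard sub (card_bier_facet Ax) -(card_bier_facet A'x').
exact: subset_leq_card.
Qed.

End BierFacets.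

Theorem theorem7 (n : nat) (D : {set {set 'I_n}}) :
  2 <= n -> proper_ideal D ->
  (forall F, facet (Bier D) F -> #|F| = n.-1) /\ shellable (Bier D).
Proof.
move=> _ [_ dcD _].
have [t [tE ut sht]] := bier_shelling_exists setT dcD.
have facetE F : facet (Bier D) F <-> F \in t by rewrite facet_BierE // tE.
have card_t F : F \in t -> #|F| = n.-1.
  by case/tE=> A [x [Ax ->]]; rewrite (card_bier_facet Ax) cardsT card_ord.
split; first by move=> F /facetE/card_t.
split; first by exists n.-1 => F /facetE/card_t.
exists t; first by split=> // F; rewrite facetE.
move=> k /andP[_]; exact: (shelling_pure_size ut card_t sht).
Qed.
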